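(* Let $G$ be a $1$-tuple regular finite group and let $N$ be a subgroup of $G$ that is a union of order classes. Then $C_G(N)$ is also a union of order classes.
   Context: A subgroup $N$ of $G$ is a union of order classes if for every $n\in\mathbb{N}$ it contains either all or none of the elements of order $n$ of $G$. A finite group $G$ is $1$-tuple regular if for all $g_1,h_1\in G$ of the same order there is a bijection $\Psi\colon G\to G$ such that for every $g\in G$ the assignment $g_1\mapsto h_1, g\mapsto\Psi(g)$ defines an isomorphism $\langle g_1,g\rangle\to\langle h_1,\Psi(g)\rangle$. *)

From mathcomp Require Import all_boot all_fingroup.
Set Implicit Arguments. Unset Strict Implicit. Unset Printing Implicit Defensive.
Import GroupScope.
Local Open Scope group_scope.

Definition union_of_order_classes (gT : finGroupType) (G N : {set gT}) : Prop :=
  forall n : nat,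
    (forall x, x \in G -> #[x] = n -> x \in N) \/
    (forall x, x \in G -> #[x] = n -> x \notin N).

Definition pair_assignment_isom (gT : finGroupType) (a g b g' : gT) : Prop :=
  exists f : {morphism <<[set a; g]>> >-> gT},
    [/\ isom <<[set a; g]>> <<[set b; g']>> f, f a = b & f g = g'].

Definition one_tuple_regular (gT : finGroupType) (G : {group gT}) : Prop :=
  forall g1 h1, g1 \in G -> h1 \in G -> #[g1] = #[h1] ->
    exists Psi : gT -> gT,
      [/\ {in G, forall g, Psi g \in G},
          {in G &, injective Psi}
        &          (forall g, g \in G -> pair_assignment_isom g1 g h1 (Psi g)) ].

From mathcomp Require Import all_boot all_fingroup.
Import GroupScope.

Set Implicit Arguments.
Unset Strict Implicit.
Unset Printing Implicit Defensive.

(* If h1 has the order of some g1 centralising N, the bijection Psi given by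
   1-tuple regularity for (g1, h1) maps each g in N to an element of the same
   order, hence back into N, and Psi g commutes with h1 because g commutes
   with g1.  Being injective, Psi permutes N, so h1 centralises N. *)

Lemma injin_subset_imset_eq (T : finType) (f : T -> T) (A : {set T}) :
  {in A &, injective f} -> f @: A \subset A -> f @: A = A.
Proof.
by move=> injf sfA; apply/eqP; rewrite eqEcard sfA (card_in_imset injf) leqnn.
Qed.

Lemma union_of_order_classesP (gT : finGroupType) (G N : {set gT}) :
  union_of_order_classes G N <->
  {in G &, forall x y, #[x] = #[y] -> x \in N -> y \in N}.
Proof.
split=> [ocN x y xG yG oxy xN | closedN n].
  case: (ocN #[x]) => [inN | notN]; first exact: inN y yG (esym oxy).
  by rewrite (negPf (notN x xG erefl)) in xN.
have [x /and3P [xG xN /eqP oxn] | noN] :=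
  pickP [pred x in G | (x \in N) && (#[x] == n)].
  by left=> y yG oyn; apply: (closedN x y) => //; rewrite oxn.
right=> y yG oyn; apply/negP=> yN.
by move: (noN y); rewrite /= yG yN oyn eqxx.
Qed.

Section PairAssignmentIsom.

Variables (gT : finGroupType) (a g b g' : gT).
Hypothesis abgg' : pair_assignment_isom a g b g'.

Let a_gen : a \in <<[set a; g]>>.
Proof. by rewrite mem_gen // !inE eqxx. Qed.

Let g_gen : g \in <<[set a; g]>>.
Proof. by rewrite mem_gen // !inE eqxx orbT. Qed.

Lemma pair_assignment_isom_order : #[g'] = #[g].
Proof.
have [f [/isomP [injf _] _ <-]] := abgg'.
exact: order_injm.
Qed.

Lemma pair_assignment_isom_commute : commute a g -> commute b g'.
Proof.
have [f [_ <- <-]] := abgg'.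
by rewrite /commute -!morphM // => ->.
Qed.

End PairAssignmentIsom.

Lemma one_tuple_regular_cent_closed (gT : finGroupType) (G N : {group gT}) :
  one_tuple_regular G -> N \subset G -> union_of_order_classes G N ->
  {in G &, forall x y, #[x] = #[y] -> x \in 'C_G(N) -> y \in 'C_G(N)}.
Proof.
move=> regG sNG /union_of_order_classesP closedN g1 h1 g1G h1G og1h1.
case/setIP=> _ cNg1.
have [Psi [PsiG injPsi isoPsi]] := regG g1 h1 g1G h1G og1h1.
have isoPsiN g : g \in N -> pair_assignment_isom g1 g h1 (Psi g).
  by move=> gN; apply: isoPsi; apply: (subsetP sNG).
have PsiN : Psi @: N = N.
  apply: injin_subset_imset_eq.
    by move=> x y xN yN; apply: injPsi; apply: (subsetP sNG).
  apply/subsetP=> _ /imsetP [g gN ->]; have gG := subsetP sNG g gN.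
  apply: (closedN g) => //; first exact: PsiG.
  by rewrite (pair_assignment_isom_order (isoPsiN g gN)).
rewrite inE h1G -PsiN; apply/centP=> _ /imsetP [g gN ->].
apply: (pair_assignment_isom_commute (isoPsiN g gN)).
exact: (centP cNg1).
Qed.

Theorem lemma3p4 (gT : finGroupType) (G N : {group gT}) :
  one_tuple_regular G -> N \subset G -> union_of_order_classes G N ->
  union_of_order_classes G 'C_G(N).
Proof.
move=> regG sNG ocN; apply/union_of_order_classesP.
exact: one_tuple_regular_cent_closed.
Qed.
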